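(* For every $n\ge1$ and $a>0$, the quantities $r_n=r_n(a)$ satisfy the second-order difference equation $$a^2r_n^2=\frac{n+r_n}{2}\,(r_{n+1}+r_n)(r_n+r_{n-1}).$$ Equivalently, $y_n:=-2r_n/a^2$ satisfies $$(y_{n+1}+y_n)(y_n+y_{n-1})=\frac{-4y_n^2}{y_n-2n/a^2},$$ which is a case of the modified discrete Painlevé II equation $(x_{n-1}+x_n)(x_n+x_{n+1})=\frac{-4x_n^2+m^2}{\lambda x_n+z_n}$ with $m=0$, $\lambda=1$, $z_n=-2n/a^2$.
   Context: Fix $a>0$. Let $w(x)=e^{-x^2}\chi_{\mathbb{R}\setminus(-a,a)}(x)$. Let $P_n$ be the monic orthogonal polynomials for $w$ on $\mathbb{R}$, with $h_n=\int P_n^2w\,dx$. Define $$r_n(a)=\frac{2e^{-a^2}P_n(a)P_{n-1}(a)}{h_{n-1}(a)}\ (n\ge1),\qquad r_0(a)=0.$$ *)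

From Stdlib Require Import Reals Lra.
Open Scope R_scope.

Definition right_improper_int (f : R -> R) (c l : R) : Prop :=
  forall eps, 0 < eps -> exists B, c <= B /\ forall b, B <= b ->
      exists pr : Riemann_integrable f c b, Rabs (RiemannInt pr - l) < eps.

Definition left_improper_int (f : R -> R) (c l : R) : Prop :=
  forall eps, 0 < eps -> exists B, B <= c /\ forall b, b <= B ->
      exists pr : Riemann_integrable f b c, Rabs (RiemannInt pr - l) < eps.

(* Integration against the weight w(x) = exp(-x^2) * chi_{R \ (-a,a)}(x). *)
Definition w_integral (a : R) (f : R -> R) (l : R) : Prop :=
  exists l1 l2,
    left_improper_int (fun x => f x * exp (- x ^ 2)) (- a) l1 /\
    right_improper_int (fun x => f x * exp (- x ^ 2)) a l2 /\
    l = l1 + l2.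

Fixpoint low_sum (c : nat -> R) (x : R) (n : nat) : R :=
  match n with
  | O => 0
  | S m => low_sum c x m + c m * x ^ m
  end.

Definition mpoly (C : nat -> nat -> R) (n : nat) (x : R) : R :=
  x ^ n + low_sum (C n) x n.

Definition monic_OPs (a : R) (C : nat -> nat -> R) (h : nat -> R) : Prop :=
  (forall m n, m <> n ->
     w_integral a (fun x => mpoly C m x * mpoly C n x) 0) /\
  (forall n, w_integral a (fun x => mpoly C n x ^ 2) (h n)).

Definition r_seq (a : R) (C : nat -> nat -> R) (h : nat -> R) (n : nat) : R :=
  match n with
  | O => 0
  | S m => 2 * exp (- a ^ 2) * mpoly C n a * mpoly C m a / h m
  end.

(* Integration by parts against w turns the boundary of the support into point values:
   for a polynomial f, int (f' - 2 x f) w = e^(-a^2) (f(-a) - f(a)).  The weight is even, so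
   P_n(-x) = (-1)^n P_n(x), and the P_n satisfy x P_n = P_(n+1) + (h_n / h_(n-1)) P_(n-1).
   Taking f = P_(n+1) P_n and f = x P_n^2 gives
     n + r_n = 2 h_n / h_(n-1)   and   r_(n+1) + r_n = 2 a e^(-a^2) P_n(a)^2 / h_n,
   and multiplying the second identity at n and at n - 1 yields
   a^2 r_n^2 = (n + r_n)/2 (r_(n+1) + r_n)(r_n + r_(n-1)).  The equation for y_n is an
   algebraic rewriting of it, legitimate because n + r_n > 0. *)

From Stdlib Require Import Reals Lra Lia.
From Coquelicot Require Import Coquelicot.
Open Scope R_scope.

Definition gauss (x : R) : R := exp (- x ^ 2).

Definition tail_int (F : R -> R) (c l : R) : Prop :=
  forall eps, 0 < eps -> exists B, c <= B /\
    forall b, B <= b -> exists v, is_RInt F c b v /\ Rabs (v - l) < eps.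

(* The half-line (-oo, -a] is folded onto [a, +oo) by x |-> -x. *)
Definition w_int (a : R) (f : R -> R) (l : R) : Prop :=
  exists l1 l2, tail_int (fun x => f (- x) * gauss x) a l1 /\
    tail_int (fun x => f x * gauss x) a l2 /\ l = l1 + l2.

Lemma gauss_opp x : gauss (- x) = gauss x.
Proof. unfold gauss; f_equal; ring. Qed.

Lemma gauss_pos x : 0 < gauss x.
Proof. apply exp_pos. Qed.

Lemma is_derive_gauss x : is_derive gauss x (- 2 * x * gauss x).
Proof.
  unfold gauss; auto_derive; [auto|]. replace (x * (x * 1)) with (x ^ 2) by ring. ring.
Qed.

Lemma is_derive_continuous (f : R -> R) x d : is_derive f x d -> continuous f x.
Proof.
  intro D. apply (ex_derive_continuous (K := R_AbsRing) (V := R_NormedModule)).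
  exists d; exact D.
Qed.

Lemma continuous_reflect (f : R -> R) x :
  continuous f (- x) -> continuous (fun y => f (- y)) x.
Proof.
  intro C. apply (continuous_comp Ropp f); [|exact C].
  apply (is_derive_continuous Ropp x (-1)). auto_derive; [auto|ring].
Qed.

Lemma continuous_gauss x : continuous gauss x.
Proof. eapply is_derive_continuous, is_derive_gauss. Qed.

Lemma is_RInt_RiemannInt f a b (pr : Riemann_integrable f a b) :
  is_RInt f a b (RiemannInt pr).
Proof.
  rewrite <- (RInt_Reals f a b pr).
  apply (@RInt_correct R_CompleteNormedModule), ex_RInt_Reals_1, pr.
Qed.

Lemma is_RInt_reflect (F : R -> R) x y v :
  is_RInt F x y v -> is_RInt (fun t => F (- t)) (- y) (- x) v.
Proof.
  intro H. apply is_RInt_swap in H. rewrite <- (Ropp_involutive y), <- (Ropp_involutive x) in H.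
  apply is_RInt_comp_opp, is_RInt_opp in H. rewrite opp_opp in H.
  eapply is_RInt_ext; [|exact H]. intros t _. apply Ropp_involutive.
Qed.

Lemma tail_int_right F c l : right_improper_int F c l -> tail_int F c l.
Proof.
  intros H eps Heps. destruct (H eps Heps) as [B [HB K]]. exists B; split; [exact HB|].
  intros b Hb. destruct (K b Hb) as [pr Hpr].
  exists (RiemannInt pr); split; [apply is_RInt_RiemannInt|exact Hpr].
Qed.

Lemma tail_int_left F c l :
  left_improper_int F c l -> tail_int (fun x => F (- x)) (- c) l.
Proof.
  intros H eps Heps. destruct (H eps Heps) as [B [HB K]]. exists (- B); split; [lra|].
  intros b Hb. destruct (K (- b)) as [pr Hpr]; [lra|].
  exists (RiemannInt pr); split; [|exact Hpr].
  pose proof (is_RInt_reflect _ _ _ _ (is_RInt_RiemannInt _ _ _ pr)) as Hr.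
  now rewrite Ropp_involutive in Hr.
Qed.

Lemma tail_int_ext F G c l : (forall x, F x = G x) -> tail_int F c l -> tail_int G c l.
Proof.
  intros E H eps Heps. destruct (H eps Heps) as [B [HB K]]. exists B; split; [exact HB|].
  intros b Hb. destruct (K b Hb) as [v [Hv Hl]]. exists v; split; [|exact Hl].
  eapply is_RInt_ext; [|exact Hv]. intros x _; apply E.
Qed.

Lemma tail_int_lin F G c l1 l2 k : tail_int F c l1 -> tail_int G c l2 ->
  tail_int (fun x => F x + k * G x) c (l1 + k * l2).
Proof.
  intros H1 H2 eps Heps. set (e := eps / 2 / (Rabs k + 1)).
  assert (Hk : 0 <= Rabs k) by apply Rabs_pos.
  assert (He : 0 < e) by (unfold e; apply Rdiv_lt_0_compat; lra).
  assert (Hke : Rabs k * e < eps / 2).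
  { unfold e. apply (Rmult_lt_reg_r (Rabs k + 1)); [lra|]. field_simplify; nra. }
  destruct (H1 (eps / 2)) as [B1 [HB1 K1]]; [lra|].
  destruct (H2 e He) as [B2 [HB2 K2]].
  exists (Rmax B1 B2); split; [eapply Rle_trans; [exact HB1|apply Rmax_l]|].
  intros b Hb. pose proof (Rmax_l B1 B2); pose proof (Rmax_r B1 B2).
  destruct (K1 b) as [v1 [Hv1 Hw1]]; [lra|]. destruct (K2 b) as [v2 [Hv2 Hw2]]; [lra|].
  exists (v1 + k * v2); split.
  - apply (is_RInt_plus F (fun y => k * G y)); [exact Hv1|apply (is_RInt_scal G), Hv2].
  - replace (v1 + k * v2 - (l1 + k * l2)) with ((v1 - l1) + k * (v2 - l2)) by ring.
    eapply Rle_lt_trans; [apply Rabs_triang|]. rewrite Rabs_mult.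
    assert (Rabs k * Rabs (v2 - l2) <= Rabs k * e) by (apply Rmult_le_compat_l; lra).
    lra.
Qed.

Lemma tail_int_unique F c l1 l2 : tail_int F c l1 -> tail_int F c l2 -> l1 = l2.
Proof.
  intros H1 H2. destruct (Req_dec l1 l2) as [|Hne]; [assumption|exfalso].
  set (e := Rabs (l1 - l2) / 2).
  assert (He : 0 < e) by (unfold e; apply Rdiv_lt_0_compat; [apply Rabs_pos_lt|]; lra).
  destruct (H1 e He) as [B1 [_ K1]]. destruct (H2 e He) as [B2 [_ K2]].
  destruct (K1 (Rmax B1 B2)) as [v1 [Hv1 Hw1]]; [apply Rmax_l|].
  destruct (K2 (Rmax B1 B2)) as [v2 [Hv2 Hw2]]; [apply Rmax_r|].
  apply (@is_RInt_unique R_CompleteNormedModule) in Hv1, Hv2. rewrite Hv1 in Hv2. subst v2.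
  pose proof (Rabs_triang (l1 - v1) (v1 - l2)) as Htri. rewrite <- Rabs_Ropp in Hw1.
  replace (l1 - v1 + (v1 - l2)) with (l1 - l2) in Htri by ring.
  replace (- (v1 - l1)) with (l1 - v1) in Hw1 by ring. unfold e in *. lra.
Qed.

Lemma tail_int_ge (F : R -> R) (c l x0 m : R) :
  (forall x, continuous F x) -> (forall x, 0 <= F x) -> c <= x0 ->
  (forall x, x0 <= x <= x0 + 1 -> m <= F x) -> tail_int F c l -> m <= l.
Proof.
  intros CF PF Hx0 Hm H. destruct (Rle_lt_dec m l) as [|Hlt]; [assumption|exfalso].
  assert (EX : forall u v, ex_RInt F u v)
    by (intros; apply (@ex_RInt_continuous R_CompleteNormedModule); auto).
  destruct (H (m - l)) as [B [HB K]]; [lra|].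
  set (b := Rmax B (x0 + 1)). pose proof (Rmax_l B (x0 + 1)); pose proof (Rmax_r B (x0 + 1)).
  destruct (K b) as [v [Hv Hw]]; [assumption|].
  apply (@is_RInt_unique R_CompleteNormedModule) in Hv.
  assert (Hsplit : RInt F c x0 + (RInt F x0 (x0 + 1) + RInt F (x0 + 1) b) = v).
  { rewrite <- Hv, <- (RInt_Chasles F c x0 b), <- (RInt_Chasles F x0 (x0 + 1) b);
      auto. }
  assert (0 <= RInt F c x0) by (apply RInt_ge_0; auto).
  assert (0 <= RInt F (x0 + 1) b) by (apply RInt_ge_0; auto; lra).
  assert (Hmid : RInt (fun _ => m) x0 (x0 + 1) <= RInt F x0 (x0 + 1)).
  { apply RInt_le; [lra|apply ex_RInt_const|apply EX|]. intros x Hx; apply Hm; lra. }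
  rewrite RInt_const in Hmid. change (scal (x0 + 1 - x0) m) with ((x0 + 1 - x0) * m) in Hmid.
  pose proof (Rle_abs (v - l)). lra.
Qed.

Lemma tail_int_derive (G g : R -> R) (c : R) :
  (forall x, is_derive G x (g x)) -> (forall x, continuous g x) ->
  (forall eps, 0 < eps -> exists M, forall x, M <= x -> Rabs (G x) < eps) ->
  tail_int g c (- G c).
Proof.
  intros DG Cg LG eps Heps. destruct (LG eps Heps) as [M HM].
  exists (Rmax c M); split; [apply Rmax_l|]. intros b Hb.
  exists (G b - G c); split.
  - apply (is_RInt_derive G g); intros; [apply DG|apply Cg].
  - replace (G b - G c - - G c) with (G b) by ring. apply HM.
    eapply Rle_trans; [apply Rmax_r|exact Hb].
Qed.

Lemma w_int_of_w_integral a f l : w_integral a f l -> w_int a f l.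
Proof.
  intros [l1 [l2 [H1 [H2 ->]]]]. exists l1, l2; split; [|split; [|reflexivity]].
  - apply tail_int_left in H1. rewrite Ropp_involutive in H1.
    eapply tail_int_ext; [|exact H1]. intro x; simpl. now rewrite <- gauss_opp.
  - now apply tail_int_right.
Qed.

Lemma w_int_congr a f g l l' :
  w_int a f l -> (forall x, f x = g x) -> l = l' -> w_int a g l'.
Proof.
  intros [l1 [l2 [H1 [H2 ->]]]] E <-. exists l1, l2; split; [|split; [|reflexivity]];
    (eapply tail_int_ext; [|eassumption]); intro x; simpl; now rewrite E.
Qed.

Lemma w_int_lin a f g l1 l2 k : w_int a f l1 -> w_int a g l2 ->
  w_int a (fun x => f x + k * g x) (l1 + k * l2).
Proof.
  intros [m1 [m2 [A1 [A2 ->]]]] [n1 [n2 [B1 [B2 ->]]]].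
  exists (m1 + k * n1), (m2 + k * n2); split; [|split; [|ring]];
    (eapply tail_int_ext; [|apply tail_int_lin; eassumption]); intro x; simpl; ring.
Qed.

Lemma w_int_unique a f l l' : w_int a f l -> w_int a f l' -> l = l'.
Proof.
  intros [m1 [m2 [A1 [A2 ->]]]] [n1 [n2 [B1 [B2 ->]]]].
  now rewrite (tail_int_unique _ _ _ _ A1 B1), (tail_int_unique _ _ _ _ A2 B2).
Qed.

Lemma w_int_reflect a f l : w_int a f l -> w_int a (fun x => f (- x)) l.
Proof.
  intros [l1 [l2 [H1 [H2 ->]]]]. exists l2, l1; split; [|split; [|ring]].
  - eapply tail_int_ext; [|exact H2]. intro x; simpl. now rewrite Ropp_involutive.
  - exact H1.
Qed.

Lemma is_derive_Rmult (f g : R -> R) x df dg : is_derive f x df -> is_derive g x dg ->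
  is_derive (fun y => f y * g y) x (df * g x + f x * dg).
Proof. intros Df Dg. apply (is_derive_mult f g); [exact Df|exact Dg|exact Rmult_comm]. Qed.

Lemma is_derive_mul_gauss (f : R -> R) x d :
  is_derive f x d -> is_derive (fun y => f y * gauss y) x ((d - 2 * x * f x) * gauss x).
Proof.
  intro D. replace ((d - 2 * x * f x) * gauss x) with (d * gauss x + f x * (- 2 * x * gauss x))
    by ring.
  apply is_derive_Rmult; [exact D|apply is_derive_gauss].
Qed.

Lemma tail_int_by_parts (f f' : R -> R) c :
  (forall x, is_derive f x (f' x)) -> (forall x, continuous f' x) ->
  (forall eps, 0 < eps -> exists M, forall x, M <= x -> Rabs (f x * gauss x) < eps) ->
  tail_int (fun x => (f' x - 2 * x * f x) * gauss x) c (- (f c * gauss c)).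
Proof.
  intros D C0 L. apply (tail_int_derive (fun x => f x * gauss x)); [|intro x|exact L].
  - intro x; apply is_derive_mul_gauss, D.
  - apply (continuous_mult (fun x => f' x - 2 * x * f x) gauss); [|apply continuous_gauss].
    apply (continuous_minus f'); [apply C0|].
    apply (continuous_mult (fun x => 2 * x) f); [|eapply is_derive_continuous, D].
    apply (continuous_scal_r 2 (fun x : R => x)), continuous_id.
Qed.

Lemma w_int_by_parts a (f f' : R -> R) :
  (forall x, is_derive f x (f' x)) -> (forall x, continuous f' x) ->
  (forall eps, 0 < eps -> exists M, forall x, M <= Rabs x -> Rabs (f x * gauss x) < eps) ->
  w_int a (fun x => f' x - 2 * x * f x) (gauss a * (f (- a) - f a)).
Proof.
  intros D C0 L. exists (f (- a) * gauss a), (- (f a * gauss a)); split; [|split; [|ring]].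
  - (* the left half is the right tail of the reflection [x |-> - f (- x)] *)
    rewrite <- (Ropp_involutive (f (- a) * gauss a)), Ropp_mult_distr_l.
    eapply tail_int_ext;
      [|apply (tail_int_by_parts (fun x => - f (- x)) (fun x => f' (- x)))].
    + intro x; simpl; ring.
    + intro x. auto_derive; [exists (f' (- x)); apply D|].
      replace (Derive (fun y : R => f y) (- x)) with (f' (- x)); [ring|].
      symmetry; apply is_derive_unique, D.
    + intro x. apply continuous_reflect, C0.
    + intros eps Heps. destruct (L eps Heps) as [M HM]. exists M. intros x Hx.
      rewrite <- gauss_opp, <- Ropp_mult_distr_l, Rabs_Ropp. apply HM.
      rewrite Rabs_Ropp. eapply Rle_trans; [exact Hx|apply Rle_abs].
  - apply tail_int_by_parts; [exact D|exact C0|].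
    intros eps Heps. destruct (L eps Heps) as [M HM]. exists M. intros x Hx.
    apply HM. eapply Rle_trans; [exact Hx|apply Rle_abs].
Qed.

Lemma w_int_pos a (f : R -> R) l x0 :
  (forall x, continuous f x) -> (forall x, 0 <= f x) -> a <= x0 -> 0 <= x0 ->
  (forall x, x0 <= x <= x0 + 1 -> 1 <= f x) -> w_int a f l -> 0 < l.
Proof.
  intros Cf Pf Hax Hx0 Hf [l1 [l2 [H1 [H2 ->]]]].
  assert (CF : forall g : R -> R, (forall x, continuous g x) ->
      forall x, continuous (fun y => g y * gauss y) x).
  { intros g Cg x. apply (continuous_mult g gauss); [apply Cg|apply continuous_gauss]. }
  assert (PF : forall x, 0 <= f x * gauss x).
  { intro x; pose proof (gauss_pos x); pose proof (Pf x); nra. }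
  assert (0 <= l1).
  { assert (PFl : forall x, 0 <= f (- x) * gauss x).
    { intro x; pose proof (gauss_pos x); pose proof (Pf (- x)); nra. }
    apply (tail_int_ge _ a l1 a 0 (CF _ (fun x => continuous_reflect f x (Cf _))) PFl);
      [lra|intros x _; apply PFl|exact H1]. }
  assert (gauss (x0 + 1) <= l2).
  { apply (tail_int_ge _ a l2 x0 _ (CF f Cf) PF Hax); [|exact H2].
    intros x Hx. pose proof (Hf x Hx). pose proof (gauss_pos x).
    assert (gauss (x0 + 1) <= gauss x).
    { unfold gauss. destruct (Req_dec x (x0 + 1)) as [->|]; [lra|].
      left; apply exp_increasing; nra. }
    nra. }
  pose proof (gauss_pos (x0 + 1)). lra.
Qed.

Definition deg_lt (f : R -> R) (d : nat) : Prop :=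
  exists c, forall x, f x = low_sum c x d.

Lemma deg_lt_ext (f g : R -> R) d : deg_lt f d -> (forall x, f x = g x) -> deg_lt g d.
Proof. intros [c Hc] E. exists c. intro x. now rewrite <- E. Qed.

Lemma deg_lt_low_sum c d : deg_lt (fun x => low_sum c x d) d.
Proof. now exists c. Qed.

Lemma low_sum_ext c c' x n : (forall k, (k < n)%nat -> c k = c' k) ->
  low_sum c x n = low_sum c' x n.
Proof.
  induction n as [|n IH]; intro E; simpl; [reflexivity|].
  rewrite IH by (intros; apply E; lia). rewrite E by lia. reflexivity.
Qed.

Lemma deg_lt_weaken f d e : (d <= e)%nat -> deg_lt f d -> deg_lt f e.
Proof.
  intros Hde [c Hc]. exists (fun k => if (k <? d)%nat then c k else 0). intro x.
  rewrite Hc. replace e with (d + (e - d))%nat by lia.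
  induction (e - d)%nat as [|m IH].
  - rewrite Nat.add_0_r. apply low_sum_ext. intros k Hk.
    now destruct (Nat.ltb_spec k d); [|lia].
  - rewrite Nat.add_succ_r. simpl. rewrite <- IH.
    destruct (Nat.ltb_spec (d + m) d); [lia|ring].
Qed.

Lemma deg_lt_0 d : deg_lt (fun _ => 0) d.
Proof.
  exists (fun _ => 0). intro x. induction d as [|d IH]; simpl; [reflexivity|].
  rewrite <- IH. ring.
Qed.

Lemma deg_lt_comb f g d k : deg_lt f d -> deg_lt g d -> deg_lt (fun x => f x + k * g x) d.
Proof.
  intros [c Hc] [c' Hc']. exists (fun j => c j + k * c' j). intro x.
  rewrite Hc, Hc'. clear. induction d as [|d IH]; simpl; [ring|]. rewrite <- IH. ring.
Qed.

Lemma deg_lt_add f g d : deg_lt f d -> deg_lt g d -> deg_lt (fun x => f x + g x) d.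
Proof. intros Hf Hg. apply (deg_lt_ext _ _ _ (deg_lt_comb _ _ _ 1 Hf Hg)). intro; ring. Qed.

Lemma deg_lt_sub f g d : deg_lt f d -> deg_lt g d -> deg_lt (fun x => f x - g x) d.
Proof. intros Hf Hg. apply (deg_lt_ext _ _ _ (deg_lt_comb _ _ _ (-1) Hf Hg)). intro; ring. Qed.

Lemma deg_lt_scal f d k : deg_lt f d -> deg_lt (fun x => k * f x) d.
Proof. intro Hf. apply (deg_lt_ext _ _ _ (deg_lt_comb _ _ _ k (deg_lt_0 d) Hf)). intro; ring. Qed.

Lemma deg_lt_const k : deg_lt (fun _ => k) 1.
Proof. exists (fun _ => k). intro x; simpl; ring. Qed.

Lemma deg_lt_xmul f d : deg_lt f d -> deg_lt (fun x => x * f x) (S d).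
Proof.
  intros [c Hc]. exists (fun k => match k with O => 0 | S j => c j end). intro x.
  rewrite Hc. clear. induction d as [|d IH]; simpl in *; [ring|]. rewrite <- IH. ring.
Qed.

Lemma deg_lt_xmul_pred g n : deg_lt g (pred n) -> deg_lt (fun x => x * g x) n.
Proof.
  destruct n as [|n]; [|apply deg_lt_xmul]. intros [c Hc].
  exists c. intro x. rewrite Hc. simpl. ring.
Qed.

Lemma deg_lt_pow_mul f d n : deg_lt f d -> deg_lt (fun x => x ^ n * f x) (n + d).
Proof.
  intro Hf. induction n as [|n IH]; simpl.
  - apply (deg_lt_ext _ _ _ Hf). intro; ring.
  - apply (deg_lt_ext _ _ _ (deg_lt_xmul _ _ IH)). intro; ring.
Qed.

Lemma deg_lt_pow n : deg_lt (fun x => x ^ n) (S n).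
Proof.
  rewrite <- Nat.add_1_r. apply (deg_lt_ext _ _ _ (deg_lt_pow_mul _ _ n (deg_lt_const 1))).
  intro; ring.
Qed.

Lemma deg_lt_mul f g d e : deg_lt f d -> deg_lt g e -> deg_lt (fun x => f x * g x) (d + e).
Proof.
  intros [c Hc] Hg. apply (deg_lt_ext (fun x => low_sum c x d * g x)); [|intro x; now rewrite Hc].
  clear Hc. induction d as [|d IH]; simpl.
  - apply (deg_lt_ext _ _ _ (deg_lt_0 e)). intro; ring.
  - assert (H1 : deg_lt (fun x => low_sum c x d * g x) (S d + e))
      by (eapply deg_lt_weaken, IH; lia).
    assert (H2 : deg_lt (fun x => x ^ d * g x) (S d + e))
      by (eapply deg_lt_weaken; [|apply deg_lt_pow_mul, Hg]; lia).
    apply (deg_lt_ext _ _ _ (deg_lt_comb _ _ _ (c d) H1 H2)). intro; ring.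
Qed.

Lemma deg_lt_reflect f d : deg_lt f d -> deg_lt (fun x => f (- x)) d.
Proof.
  intros [c Hc]. exists (fun k => (-1) ^ k * c k). intro x. rewrite Hc. clear.
  induction d as [|d IH]; simpl; [reflexivity|]. rewrite IH.
  replace (- x) with (-1 * x) by ring. rewrite Rpow_mult_distr. ring.
Qed.

Lemma is_derive_pow_id n x : is_derive (fun y => y ^ n) x (INR n * x ^ pred n).
Proof.
  replace (INR n * x ^ pred n) with (INR n * 1 * x ^ pred n) by ring.
  apply (is_derive_pow (fun y => y)), (is_derive_id (K := R_AbsRing)).
Qed.

Lemma deg_lt_derive f d :
  deg_lt f d -> exists f', deg_lt f' (pred d) /\ forall x, is_derive f x (f' x).
Proof.
  intros [c Hc]. cut (exists f', deg_lt f' (pred d) /\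
    forall x, is_derive (fun y => low_sum c y d) x (f' x)).
  { intros [f' [Hf' D]]. exists f'; split; [exact Hf'|].
    intro x. eapply is_derive_ext, D. intro; now rewrite Hc. }
  clear Hc. induction d as [|d [g [Hg D]]].
  - exists (fun _ => 0); split; [apply deg_lt_0|].
    intro x. apply (is_derive_const (K := R_AbsRing) (0 : R)).
  - exists (fun x => g x + c d * (INR d * x ^ pred d)); split.
    + apply deg_lt_comb; [eapply deg_lt_weaken, Hg; simpl; lia|].
      destruct d as [|d]; simpl.
      * apply (deg_lt_ext _ _ _ (deg_lt_0 0)). intro; simpl; ring.
      * apply deg_lt_scal, deg_lt_pow.
    + intro x. apply (is_derive_plus (K := R_AbsRing) (V := R_NormedModule)); [apply D|].
      apply is_derive_scal, is_derive_pow_id.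
Qed.

Lemma deg_lt_continuous f d : deg_lt f d -> forall x, continuous f x.
Proof.
  intros Hf x. destruct (deg_lt_derive f d Hf) as [f' [_ D]].
  eapply is_derive_continuous, D.
Qed.

Fixpoint coef_abs_sum (c : nat -> R) (n : nat) : R :=
  match n with O => 0 | S m => coef_abs_sum c m + Rabs (c m) end.

Lemma coef_abs_sum_ge0 c n : 0 <= coef_abs_sum c n.
Proof. induction n; simpl; [lra|]. pose proof (Rabs_pos (c n)); lra. Qed.

Lemma low_sum_abs_le c x n :
  1 <= Rabs x -> Rabs (low_sum c x n) <= coef_abs_sum c n * Rabs x ^ pred n.
Proof.
  intro Hx. induction n as [|n IH]; simpl.
  - rewrite Rabs_R0; lra.
  - eapply Rle_trans; [apply Rabs_triang|]. rewrite Rabs_mult, <- RPow_abs.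
    assert (Rabs x ^ pred n <= Rabs x ^ n) by (apply Rle_pow; [lra|lia]).
    pose proof (coef_abs_sum_ge0 c n). pose proof (Rabs_pos (c n)). nra.
Qed.

Lemma exp_mul_INR N z : exp (INR N * z) = exp z ^ N.
Proof.
  induction N as [|N IH]; [simpl; now rewrite Rmult_0_l, exp_0|].
  rewrite S_INR, Rmult_plus_distr_r, exp_plus, IH, Rmult_1_l. simpl; ring.
Qed.

(* From [z ^ N <= exp z ^ N = exp (N z)] with [z = t ^ 2 / N]. *)
Lemma pow_le_exp_sq t m : 1 <= t -> t ^ S m <= INR (S m) ^ S m * exp (t ^ 2).
Proof.
  intro Ht. set (N := S m). assert (HN : 0 < INR N) by (apply lt_0_INR; unfold N; lia).
  set (z := t ^ 2 / INR N).
  assert (Hz : 0 <= z) by (unfold z; apply Rdiv_le_0_compat; nra).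
  assert (E : exp (t ^ 2) = exp z ^ N).
  { rewrite <- exp_mul_INR. f_equal. unfold z. field. lra. }
  assert (Hzexp : z ^ N <= exp z ^ N).
  { apply pow_incr; split; [exact Hz|]. pose proof (exp_ineq1_le z); lra. }
  assert (Ez : INR N ^ N * z ^ N = t ^ (2 * N)).
  { rewrite <- Rpow_mult_distr, pow_mult. f_equal. unfold z; field; lra. }
  assert (t ^ N <= t ^ (2 * N)) by (apply Rle_pow; [exact Ht|lia]).
  assert (0 <= INR N ^ N) by (apply pow_le; lra).
  rewrite E. nra.
Qed.

Lemma deg_lt_abs_le_exp f d : deg_lt f d -> exists K, 0 <= K /\
  forall x, 1 <= Rabs x -> Rabs (f x) * Rabs x <= K * exp (x ^ 2).
Proof.
  intros [c Hc]. set (A := coef_abs_sum c d). set (N := S (pred d)).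
  assert (HA : 0 <= A) by apply coef_abs_sum_ge0.
  exists (A * INR N ^ N); split; [apply Rmult_le_pos; [exact HA|apply pow_le, pos_INR]|].
  intros x Hx. rewrite Hc. set (t := Rabs x) in *.
  pose proof (low_sum_abs_le c x d Hx) as B1. fold t A in B1.
  pose proof (pow_le_exp_sq t (pred d) Hx) as B2. fold N in B2.
  replace (t ^ 2) with (x ^ 2) in B2
    by (unfold t; rewrite RPow_abs, Rabs_right; [reflexivity|apply Rle_ge, pow2_ge_0]).
  change (t ^ N) with (t * t ^ pred d) in B2.
  assert (Rabs (low_sum c x d) * t <= A * t ^ pred d * t) by (apply Rmult_le_compat_r; lra).
  assert (A * (t * t ^ pred d) <= A * (INR N ^ N * exp (x ^ 2)))
    by (apply Rmult_le_compat_l; lra).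
  nra.
Qed.

Lemma deg_lt_gauss_vanish f d : deg_lt f d -> forall eps, 0 < eps ->
  exists M, forall x, M <= Rabs x -> Rabs (f x * gauss x) < eps.
Proof.
  intros Hf eps Heps. destruct (deg_lt_abs_le_exp f d Hf) as [K [HK B]].
  exists (Rmax 1 (K / eps + 1)). intros x Hx.
  pose proof (Rmax_l 1 (K / eps + 1)); pose proof (Rmax_r 1 (K / eps + 1)).
  specialize (B x ltac:(lra)).
  assert (HKx : K < eps * Rabs x).
  { replace K with (eps * (K / eps)) by (field; lra). apply Rmult_lt_compat_l; lra. }
  unfold gauss. rewrite exp_Ropp. set (E := exp (x ^ 2)) in *.
  assert (HE : 0 < E) by apply exp_pos.
  rewrite Rabs_mult, (Rabs_right (/ E)) by (left; apply Rinv_0_lt_compat, HE).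
  apply (Rmult_lt_reg_r (E * Rabs x)); [nra|].
  replace (Rabs (f x) * / E * (E * Rabs x)) with (Rabs (f x) * Rabs x) by (field; lra).
  nra.
Qed.

Lemma deg_lt_is_derive (f f' : R -> R) d :
  deg_lt f d -> (forall x, is_derive f x (f' x)) -> deg_lt f' (pred d).
Proof.
  intros Hf D. destruct (deg_lt_derive f d Hf) as [g [Hg Dg]].
  apply (deg_lt_ext _ _ _ Hg). intro x.
  now rewrite <- (is_derive_unique f x _ (D x)), (is_derive_unique f x _ (Dg x)).
Qed.

Lemma w_int_by_parts_poly a (f f' : R -> R) d : deg_lt f d -> (forall x, is_derive f x (f' x)) ->
  w_int a (fun x => f' x - 2 * x * f x) (gauss a * (f (- a) - f a)).
Proof.
  intros Hf D. apply w_int_by_parts; [exact D| |apply (deg_lt_gauss_vanish _ _ Hf)].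
  exact (deg_lt_continuous _ _ (deg_lt_is_derive f f' d Hf D)).
Qed.

Lemma mpoly_0 C x : mpoly C 0 x = 1.
Proof. unfold mpoly; simpl; ring. Qed.

Lemma deg_lt_mpoly_sub_pow C n : deg_lt (fun x => mpoly C n x - x ^ n) n.
Proof. exists (C n). intro x. unfold mpoly; ring. Qed.

Lemma deg_lt_mpoly C n : deg_lt (mpoly C n) (S n).
Proof.
  apply (deg_lt_ext _ _ _ (deg_lt_add _ _ _ (deg_lt_pow n)
    (deg_lt_weaken _ _ _ (Nat.le_succ_diag_r n) (deg_lt_mpoly_sub_pow C n)))).
  intro; ring.
Qed.

Lemma deg_lt_xmul_mpoly_sub C n : deg_lt (fun x => x * mpoly C n x - mpoly C (S n) x) (S n).
Proof.
  apply (deg_lt_ext _ _ _ (deg_lt_sub _ _ _ (deg_lt_xmul _ _ (deg_lt_mpoly_sub_pow C n))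
    (deg_lt_mpoly_sub_pow C (S n)))).
  intro x; simpl; ring.
Qed.

Lemma mpoly_ge_1 C n x : coef_abs_sum (C n) n + 1 <= x -> 1 <= mpoly C n x.
Proof.
  intro Hx. pose proof (coef_abs_sum_ge0 (C n) n).
  assert (Hx1 : 1 <= Rabs x) by (rewrite Rabs_right; lra).
  pose proof (low_sum_abs_le (C n) x n Hx1) as B. rewrite (Rabs_right x) in B by lra.
  pose proof (Rle_abs (- low_sum (C n) x n)) as L. rewrite Rabs_Ropp in L.
  unfold mpoly. destruct n as [|n]; simpl in *; [lra|].
  assert (1 <= x ^ n) by (apply pow_R1_Rle; lra). nra.
Qed.

Lemma mpoly_derive C n : exists D : R -> R, (forall x, is_derive (mpoly C n) x (D x)) /\
  deg_lt D n /\ deg_lt (fun x => D x - INR n * x ^ pred n) (pred n).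
Proof.
  destruct (deg_lt_derive _ _ (deg_lt_mpoly_sub_pow C n)) as [g [Hg Dg]].
  assert (DD : forall x, is_derive (mpoly C n) x (INR n * x ^ pred n + g x)).
  { intro x. apply (is_derive_ext (fun y => y ^ n + (mpoly C n y - y ^ n))).
    - intro t. change (t ^ n + (mpoly C n t - t ^ n) = mpoly C n t). ring.
    - apply (is_derive_plus (K := R_AbsRing) (V := R_NormedModule));
        [apply is_derive_pow_id|apply Dg]. }
  exists (fun x => INR n * x ^ pred n + g x); split; [exact DD|split].
  - exact (deg_lt_is_derive _ _ _ (deg_lt_mpoly C n) DD).
  - apply (deg_lt_ext _ _ _ Hg). intro; ring.
Qed.

Fixpoint mpoly_comb (C : nat -> nat -> R) (e : nat -> R) (d : nat) (x : R) : R :=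
  match d with O => 0 | S k => mpoly_comb C e k x + e k * mpoly C k x end.

Lemma mpoly_comb_ext C e e' d x : (forall k, (k < d)%nat -> e k = e' k) ->
  mpoly_comb C e d x = mpoly_comb C e' d x.
Proof.
  induction d as [|d IH]; intro E; simpl; [reflexivity|].
  rewrite IH by (intros; apply E; lia). rewrite E by lia. reflexivity.
Qed.

(* Triangularity of the monic basis: subtract [c_d P_d] to lower the degree. *)
Lemma deg_lt_mpoly_comb C f d : deg_lt f d -> exists e, forall x, f x = mpoly_comb C e d x.
Proof.
  revert f. induction d as [|d IH]; intros f [c Hc].
  - exists (fun _ => 0). exact Hc.
  - destruct (IH (fun x => low_sum c x d + - c d * low_sum (C d) x d)) as [e He].
    { apply deg_lt_comb; apply deg_lt_low_sum. }
    exists (fun k => if (k =? d)%nat then c d else e k). intro x. simpl.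
    rewrite Nat.eqb_refl, (mpoly_comb_ext C _ e)
      by (intros k Hk; destruct (Nat.eqb_spec k d); [lia|reflexivity]).
    rewrite <- He, Hc. unfold mpoly. simpl. ring.
Qed.

Definition rec_coef (h : nat -> R) (n : nat) : R :=
  match n with O => 0 | S m => h (S m) / h m end.

Section MonicOrthogonalPolynomials.

Variables (a : R) (C : nat -> nat -> R) (h : nat -> R).
Hypothesis OP : monic_OPs a C h.

Local Notation P := (mpoly C).

Lemma w_int_PP m n : w_int a (fun x => P m x * P n x) (if (m =? n)%nat then h n else 0).
Proof.
  destruct OP as [Horth Hnorm]. destruct (Nat.eqb_spec m n) as [->|Hmn].
  - apply (w_int_congr _ _ _ _ _ (w_int_of_w_integral _ _ _ (Hnorm n))); [intro; ring|auto].
  - apply w_int_of_w_integral, Horth, Hmn.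
Qed.

Lemma w_int_zero : w_int a (fun _ => 0) 0.
Proof.
  pose proof (w_int_PP 0 0) as H.
  apply (w_int_congr _ _ _ _ _ (w_int_lin _ _ _ _ _ (-1) H H)); intros; ring.
Qed.

Lemma w_int_comb_P e d j :
  w_int a (fun x => mpoly_comb C e d x * P j x) (if (j <? d)%nat then e j * h j else 0).
Proof.
  induction d as [|d IH]; simpl.
  - apply (w_int_congr _ _ _ _ _ w_int_zero); intros; ring.
  - apply (w_int_congr _ _ _ _ _ (w_int_lin _ _ _ _ _ (e d) IH (w_int_PP d j)));
      [intro; ring|].
    destruct (Nat.ltb_spec j (S d)), (Nat.ltb_spec j d), (Nat.eqb_spec d j);
      subst; try lia; ring.
Qed.

Lemma w_int_orth f d m : deg_lt f d -> (d <= m)%nat -> w_int a (fun x => f x * P m x) 0.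
Proof.
  intros Hf Hdm. destruct (deg_lt_mpoly_comb C f d Hf) as [e He].
  apply (w_int_congr _ _ _ _ _ (w_int_comb_P e d m)); [intro x; now rewrite He|].
  destruct (Nat.ltb_spec m d); [lia|reflexivity].
Qed.

Lemma w_int_exists f d : deg_lt f d -> exists l, w_int a f l.
Proof.
  intro Hf. destruct (deg_lt_mpoly_comb C f d Hf) as [e He].
  eexists. apply (w_int_congr _ _ _ _ _ (w_int_comb_P e d 0)); [|reflexivity].
  intro x. now rewrite He, mpoly_0, Rmult_1_r.
Qed.

Lemma h_pos k : 0 < h k.
Proof.
  set (x0 := Rmax a (coef_abs_sum (C k) k + 1)).
  pose proof (Rmax_l a (coef_abs_sum (C k) k + 1)).
  pose proof (Rmax_r a (coef_abs_sum (C k) k + 1)). pose proof (coef_abs_sum_ge0 (C k) k).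
  apply (w_int_pos a (fun x => P k x * P k x) (h k) x0); [| |unfold x0; lra|unfold x0; lra| |].
  - apply (deg_lt_continuous _ _ (deg_lt_mul _ _ _ _ (deg_lt_mpoly C k) (deg_lt_mpoly C k))).
  - intro x; apply Rle_0_sqr.
  - intros x Hx. assert (1 <= P k x) by (apply mpoly_ge_1; unfold x0 in *; lra). nra.
  - pose proof (w_int_PP k k) as Hk. now rewrite Nat.eqb_refl in Hk.
Qed.

Lemma deg_lt_orth_eq0 f d : deg_lt f d ->
  (forall k, (k < d)%nat -> w_int a (fun x => f x * P k x) 0) -> forall x, f x = 0.
Proof.
  intros Hf Horth x. destruct (deg_lt_mpoly_comb C f d Hf) as [e He].
  assert (E : forall k, (k < d)%nat -> e k = 0).
  { intros k Hk. pose proof (h_pos k).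
    assert (Hint := w_int_unique _ _ _ _ (w_int_comb_P e d k)
      (w_int_congr _ _ _ _ _ (Horth k Hk) (fun x => f_equal (fun y => y * P k x) (He x))
        eq_refl)).
    destruct (Nat.ltb_spec k d); [|lia]. nra. }
  rewrite He, (mpoly_comb_ext C e (fun _ => 0)) by exact E. clear.
  induction d as [|d IH]; simpl; [reflexivity|]. rewrite IH. ring.
Qed.

Lemma mpoly_opp n x : P n (- x) = (-1) ^ n * P n x.
Proof.
  apply Rminus_diag_uniq. revert x.
  apply (deg_lt_orth_eq0 _ n).
  - apply (deg_lt_ext _ _ _ (deg_lt_comb _ _ _ (- (-1) ^ n)
      (deg_lt_reflect _ _ (deg_lt_mpoly_sub_pow C n)) (deg_lt_mpoly_sub_pow C n))).
    intro x. replace (- x) with (-1 * x) by ring. rewrite Rpow_mult_distr. ring.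
  - intros k Hk.
    assert (Hrefl : w_int a (fun x => P n (- x) * P k x) 0).
    { apply (w_int_congr _ _ _ _ _ (w_int_reflect _ _ _
        (w_int_congr _ _ _ _ _ (w_int_orth _ _ _ (deg_lt_reflect _ _ (deg_lt_mpoly C k)) Hk)
          (fun x => Rmult_comm _ _) eq_refl)));
        [intro x; simpl; now rewrite Ropp_involutive|reflexivity]. }
    pose proof (w_int_PP n k) as Hnk. destruct (Nat.eqb_spec n k) as [|_]; [lia|].
    apply (w_int_congr _ _ _ _ _ (w_int_lin _ _ _ _ _ (- (-1) ^ n) Hrefl Hnk));
      [intro; ring|ring].
Qed.

Lemma mpoly_opp_mul n m x : P n (- x) * P m (- x) = (-1) ^ (n + m) * (P n x * P m x).
Proof. rewrite !mpoly_opp, pow_add. ring. Qed.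

Lemma w_int_odd f d : deg_lt f d -> (forall x, f (- x) = - f x) -> w_int a f 0.
Proof.
  intros Hf Hodd. destruct (w_int_exists f d Hf) as [l Hl].
  assert (Hneg : w_int a f (- l)).
  { apply (w_int_congr _ _ _ _ _ (w_int_lin _ _ _ _ _ (-1) w_int_zero (w_int_reflect _ _ _ Hl)));
      [intro x; rewrite Hodd; ring|ring]. }
  replace 0 with l; [exact Hl|]. pose proof (w_int_unique _ _ _ _ Hl Hneg). lra.
Qed.

Lemma w_int_lead f c d : deg_lt (fun x => f x - c * x ^ d) d ->
  w_int a (fun x => f x * P d x) (c * h d).
Proof.
  intro Hf. pose proof (w_int_PP d d) as Hdd. rewrite Nat.eqb_refl in Hdd.
  assert (Hlow : deg_lt (fun x => f x - c * P d x) d).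
  { apply (deg_lt_ext _ _ _ (deg_lt_comb _ _ _ (- c) Hf (deg_lt_mpoly_sub_pow C d))).
    intro; ring. }
  apply (w_int_congr _ _ _ _ _ (w_int_lin _ _ _ _ _ c (w_int_orth _ _ _ Hlow (le_n d)) Hdd));
    [intro; ring|ring].
Qed.

Lemma w_int_xPP n k : (k <= n)%nat ->
  w_int a (fun x => x * P n x * P k x) (if (n =? S k)%nat then h n else 0).
Proof.
  intro Hkn. destruct (Nat.eq_dec k n) as [->|Hne].
  - replace (n =? S n)%nat with false by (symmetry; apply Nat.eqb_neq; lia).
    apply (w_int_odd _ (S (S n) + S n)).
    + apply deg_lt_mul; [apply deg_lt_xmul|]; apply deg_lt_mpoly.
    + intro x. rewrite Rmult_assoc, mpoly_opp_mul.
      replace (n + n)%nat with (2 * n)%nat by lia. rewrite pow_1_even. ring.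
  - (* x P_k = P_(k+1) + (lower degree), and P_n is orthogonal to the lower part *)
    pose proof (w_int_PP (S k) n) as Hk.
    pose proof (w_int_orth _ _ n (deg_lt_xmul_mpoly_sub C k) ltac:(lia)) as Hlow.
    apply (w_int_congr _ _ _ _ _ (w_int_lin _ _ _ _ _ 1 Hk Hlow)); [intro; ring|].
    destruct (Nat.eqb_spec (S k) n), (Nat.eqb_spec n (S k)); subst; try lia; ring.
Qed.

Lemma mpoly_rec n x : x * P n x = P (S n) x + rec_coef h n * P (pred n) x.
Proof.
  apply Rminus_diag_uniq. revert x. apply (deg_lt_orth_eq0 _ (S n)).
  - apply (deg_lt_ext _ _ _ (deg_lt_comb _ _ _ (- rec_coef h n) (deg_lt_xmul_mpoly_sub C n)
      (deg_lt_weaken _ (S (pred n)) (S n) ltac:(lia) (deg_lt_mpoly C (pred n))))).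
    intro; ring.
  - intros k Hk.
    apply (w_int_congr _ _ _ _ _ (w_int_lin _ _ _ _ _ (- rec_coef h n)
      (w_int_lin _ _ _ _ _ (-1) (w_int_xPP n k ltac:(lia)) (w_int_PP (S n) k))
      (w_int_PP (pred n) k))); [intro; ring|].
    pose proof (h_pos k). destruct (Nat.eqb_spec (S n) k); [lia|].
    destruct n as [|m]; simpl rec_coef; simpl pred; [simpl; ring|].
    destruct (Nat.eqb_spec (S m) (S k)), (Nat.eqb_spec m k); try lia; [|ring].
    subst; field; lra.
Qed.

Lemma by_parts_PP m : INR (S m) * h m - 2 * h (S m) = - 2 * gauss a * P (S m) a * P m a.
Proof.
  destruct (mpoly_derive C (S m)) as [Dn [DDn [_ HDn]]].
  destruct (mpoly_derive C m) as [Dm [DDm [HDm _]]].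
  assert (IBP := w_int_by_parts_poly a _ _ _ (deg_lt_mul _ _ _ _ (deg_lt_mpoly C (S m))
    (deg_lt_mpoly C m)) (fun x => is_derive_Rmult _ _ x _ _ (DDn x) (DDm x))).
  assert (V1 : w_int a (fun x => Dn x * P m x) (INR (S m) * h m)) by exact (w_int_lead _ _ _ HDn).
  assert (V2 : w_int a (fun x => P (S m) x * Dm x) 0).
  { apply (w_int_congr _ _ _ _ _ (w_int_orth _ _ (S m) HDm ltac:(lia)));
      [intro; ring|reflexivity]. }
  assert (V3 := w_int_xPP (S m) m ltac:(lia)). rewrite Nat.eqb_refl in V3.
  assert (V : w_int a (fun x => Dn x * P m x + P (S m) x * Dm x - 2 * x * (P (S m) x * P m x))
    (INR (S m) * h m + 1 * 0 + -2 * h (S m))).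
  { apply (w_int_congr _ _ _ _ _ (w_int_lin _ _ _ _ _ (-2) (w_int_lin _ _ _ _ _ 1 V1 V2) V3));
      [intro; ring|reflexivity]. }
  pose proof (w_int_unique _ _ _ _ IBP V) as U. cbv beta in U.
  rewrite mpoly_opp_mul in U. replace (S m + m)%nat with (S (2 * m)) in U by lia.
  rewrite pow_1_odd in U. lra.
Qed.

Lemma by_parts_xPP n : h n + 2 * INR n * h n - 2 * (h (S n) + rec_coef h n ^ 2 * h (pred n))
  = - 2 * a * gauss a * P n a ^ 2.
Proof.
  destruct (mpoly_derive C n) as [D [DD [_ HDl]]].
  assert (DxP : forall x, is_derive (fun y => y * P n y) x (1 * P n x + x * D x))
    by (intro x; apply is_derive_Rmult; [apply (is_derive_id (K := R_AbsRing))|apply DD]).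
  assert (IBP := w_int_by_parts_poly a _ _ _
    (deg_lt_mul _ _ _ _ (deg_lt_xmul _ _ (deg_lt_mpoly C n)) (deg_lt_mpoly C n))
    (fun x => is_derive_Rmult _ _ x _ _ (DxP x) (DD x))).
  pose proof (w_int_PP n n) as V1. rewrite Nat.eqb_refl in V1.
  assert (V2 : w_int a (fun x => x * D x * P n x) (INR n * h n)).
  { apply w_int_lead, (deg_lt_ext _ _ _ (deg_lt_xmul_pred _ _ HDl)).
    intro x; destruct n; simpl; ring. }
  (* (x P_n)^2 = (P_(n+1) + rec_coef h n * P_(n-1))^2 by the three-term recurrence *)
  assert (V3 : w_int a (fun x => x * P n x * (x * P n x))
    (h (S n) + 2 * rec_coef h n * 0 + rec_coef h n ^ 2 * h (pred n))).
  { pose proof (w_int_PP (S n) (S n)) as A. rewrite Nat.eqb_refl in A.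
    pose proof (w_int_PP (pred n) (pred n)) as B. rewrite Nat.eqb_refl in B.
    pose proof (w_int_PP (S n) (pred n)) as Hc.
    replace (S n =? pred n)%nat with false in Hc by (symmetry; apply Nat.eqb_neq; lia).
    apply (w_int_congr _ _ _ _ _ (w_int_lin _ _ _ _ _ (rec_coef h n ^ 2)
      (w_int_lin _ _ _ _ _ (2 * rec_coef h n) A Hc) B)); [|reflexivity].
    intro x. rewrite mpoly_rec. ring. }
  assert (V : w_int a (fun x => (1 * P n x + x * D x) * P n x + x * P n x * D x
      - 2 * x * (x * P n x * P n x))
    (h n + 2 * (INR n * h n) + -2 * (h (S n) + 2 * rec_coef h n * 0
      + rec_coef h n ^ 2 * h (pred n)))).
  { apply (w_int_congr _ _ _ _ _ (w_int_lin _ _ _ _ _ (-2) (w_int_lin _ _ _ _ _ 2 V1 V2) V3));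
      [intro; ring|reflexivity]. }
  pose proof (w_int_unique _ _ _ _ IBP V) as U. cbv beta in U.
  rewrite Rmult_assoc, mpoly_opp_mul in U. replace (n + n)%nat with (2 * n)%nat in U by lia.
  rewrite pow_1_even in U. lra.
Qed.

Lemma r_seq_S_add_INR j : INR (S j) + r_seq a C h (S j) = 2 * h (S j) / h j.
Proof.
  pose proof (by_parts_PP j) as E. pose proof (h_pos j). unfold gauss in E. unfold r_seq.
  replace (2 * exp (- a ^ 2) * P (S j) a * P j a) with (2 * h (S j) - INR (S j) * h j) by lra.
  field. lra.
Qed.

Lemma r_seq_S_add j : r_seq a C h (S j) + r_seq a C h j = 2 * a * gauss a * P j a ^ 2 / h j.
Proof.
  pose proof (by_parts_xPP j) as E. pose proof (h_pos j).
  assert (HS := r_seq_S_add_INR j).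
  replace (r_seq a C h (S j)) with (2 * h (S j) / h j - INR (S j)) by lra.
  destruct j as [|k].
  - change (r_seq a C h 0) with 0. change (INR 1) with 1.
    simpl rec_coef in E. change (INR 0) with 0 in E.
    replace (2 * a * gauss a * P 0 a ^ 2) with (- (- 2 * a * gauss a * P 0 a ^ 2))
      by ring. rewrite <- E. field. lra.
  - pose proof (h_pos k). assert (HS' := r_seq_S_add_INR k).
    replace (r_seq a C h (S k)) with (2 * h (S k) / h k - INR (S k)) by lra.
    replace (2 * a * gauss a * P (S k) a ^ 2) with (- (- 2 * a * gauss a * P (S k) a ^ 2))
      by ring. rewrite <- E. simpl rec_coef. simpl pred. rewrite (S_INR (S k)). field. lra.
Qed.

Lemma r_seq_eq n : (1 <= n)%nat ->
  a ^ 2 * r_seq a C h n ^ 2 = (INR n + r_seq a C h n) / 2 *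
    (r_seq a C h (S n) + r_seq a C h n) * (r_seq a C h n + r_seq a C h (pred n)).
Proof.
  intro Hn. destruct n as [|m]; [lia|]. simpl pred.
  pose proof (h_pos m). pose proof (h_pos (S m)).
  rewrite r_seq_S_add, r_seq_S_add, r_seq_S_add_INR. unfold r_seq at 1, gauss. field. lra.
Qed.

End MonicOrthogonalPolynomials.

Lemma mdPII_of_r_eq (a n rp r rn : R) : 0 < a -> 0 < n + r ->
  a ^ 2 * r ^ 2 = (n + r) / 2 * (rn + r) * (r + rp) ->
  let y := fun t => - 2 * t / a ^ 2 in
  (y rn + y r) * (y r + y rp) = - 4 * y r ^ 2 / (y r - 2 * n / a ^ 2).
Proof.
  intros Ha Hnr E y. unfold y.
  assert (E' : (rn + r) * (r + rp) = 2 * a ^ 2 * r ^ 2 / (n + r)).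
  { apply (Rmult_eq_reg_l ((n + r) / 2)); [|lra]. rewrite <- Rmult_assoc, <- E. field. lra. }
  replace ((-2 * rn / a ^ 2 + -2 * r / a ^ 2) * (-2 * r / a ^ 2 + -2 * rp / a ^ 2))
    with (4 / a ^ 4 * ((rn + r) * (r + rp))) by (field; lra).
  rewrite E'. field. split; lra.
Qed.

Theorem mainTheorem3 (a : R) (C : nat -> nat -> R) (h : nat -> R) :
  0 < a -> monic_OPs a C h ->
  forall n : nat, (1 <= n)%nat ->
    let r := r_seq a C h in
    let y := fun k => - 2 * r k / a ^ 2 in
    a ^ 2 * r n ^ 2 = (INR n + r n) / 2 * (r (S n) + r n) * (r n + r (pred n)) /\
    (y (S n) + y n) * (y n + y (pred n)) = - 4 * y n ^ 2 / (y n - 2 * INR n / a ^ 2).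
Proof.
  intros Ha OP n Hn r y.
  assert (Er := r_seq_eq a C h OP n Hn).
  assert (Hpos : 0 < INR n + r n).
  { destruct n as [|m]; [lia|]. unfold r. rewrite (r_seq_S_add_INR a C h OP m).
    pose proof (h_pos a C h OP m). pose proof (h_pos a C h OP (S m)).
    apply Rdiv_lt_0_compat; lra. }
  split; [exact Er|]. exact (mdPII_of_r_eq a (INR n) _ _ _ Ha Hpos Er).
Qed.
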